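(* Let $f$ and $g$ be the functions of $(\xi,\eta)$ defined in the context, with $\mu=\frac{59729}{19885499729}$ and $c=\frac{149896229}{10}\sqrt{\frac{1495978707}{3317816087784734}}$. Let $$x_1=\tfrac{312498189077}{625000000000},\quad x_2=\tfrac{312498095327}{625000000000},\quad y_1=\tfrac{4330127145451}{5000000000000},\quad y_3=\tfrac{43301267124383}{50000000000000},$$ so that $x_2<x_1$, $y_3<y_1$, and let $R=[x_2,x_1]\times[y_3,y_1]$. Then (i) $g>0$ on the top edge $\{(x,y_1):x\in[x_2,x_1]\}$ and $g<0$ on the bottom edge $\{(x,y_3):x\in[x_2,x_1]\}$; (ii) $f>0$ on the right edge $\{(x_1,y):y\in[y_3,y_1]\}$ and $f<0$ on the left edge $\{(x_2,y):y\in[y_3,y_1]\}$; (iii) consequently there exists a point $P_0=(\xi_0,\eta_0)\in R$ with $f(\xi_0,\eta_0)=g(\xi_0,\eta_0)=0$, i.e. $(\xi_0,\eta_0)$ is an equilibrium point of the relativistic circular restricted three-body system described in the context.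
   Context: Relativistic circular restricted three-body problem in rotating coordinates $(\xi,\eta)$ with mass parameter $\mu\in(0,1/2]$ and (normalized) speed of light $c>0$. Set $\rho=\sqrt{\xi^2+\eta^2}$, $\rho_1=\sqrt{(\xi+\mu)^2+\eta^2}$, $\rho_2=\sqrt{(\xi+\mu-1)^2+\eta^2}$, and $V=\dot\xi^2+\dot\eta^2+2(\xi\dot\eta-\dot\xi\eta)+\rho^2$. Define $$w_0=\tfrac12(\xi^2+\eta^2)+\frac{1-\mu}{\rho_1}+\frac{\mu}{\rho_2},$$ $$w_1=-\tfrac32\Big(1-\tfrac13\mu(1-\mu)\Big)\rho^2+\tfrac18V^2+\tfrac32\Big(\frac{1-\mu}{\rho_1}+\frac{\mu}{\rho_2}\Big)V-\tfrac12\Big(\frac{(1-\mu)^2}{\rho_1^2}+\frac{\mu^2}{\rho_2^2}\Big)$$ $$\qquad+\mu(1-\mu)\Big[\Big(4\dot\eta+\tfrac{7\xi}{2}\Big)\Big(\frac1{\rho_1}-\frac1{\rho_2}\Big)-\tfrac12\eta^2\Big(\frac{\mu}{\rho_1^3}+\frac{1-\mu}{\rho_2^3}\Big)+\frac{3\mu-2}{2\rho_1}-\frac{1}{\rho_1\rho_2}+\frac{1-3\mu}{2\rho_2}\Big],$$ $w=w_0+\frac1{c^2}w_1$ (a function of $\xi,\dot\xi,\eta,\dot\eta$), and $n=1-\frac{3}{2c^2}\big(1-\frac13\mu(1-\mu)\big)$. The equations of motion are $$\ddot\xi-2n\dot\eta=\frac{\partial w}{\partial\xi}-\frac{d}{dt}\Big(\frac{\partial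 w}{\partial\dot\xi}\Big),\qquad \ddot\eta+2n\dot\xi=\frac{\partial w}{\partial\eta}-\frac{d}{dt}\Big(\frac{\partial w}{\partial\dot\eta}\Big).$$ Define $f(\xi,\eta)=\frac{\partial w}{\partial\xi}$ and $g(\xi,\eta)=\frac{\partial w}{\partial\eta}$, both evaluated at $\dot\xi=\dot\eta=0$; the equilibrium points (constant solutions) of the system are exactly the common zeros of $f$ and $g$. *)

From Stdlib Require Import Reals.
Open Scope R_scope.

Definition rho (xi eta : R) : R := sqrt (xi^2 + eta^2).
Definition rho1 (mu xi eta : R) : R := sqrt ((xi + mu)^2 + eta^2).
Definition rho2 (mu xi eta : R) : R := sqrt ((xi + mu - 1)^2 + eta^2).

Definition Vfun (xi xid eta etad : R) : R :=
  xid^2 + etad^2 + 2 * (xi * etad - xid * eta) + (rho xi eta)^2.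

Definition w0 (mu xi eta : R) : R :=
  / 2 * (xi^2 + eta^2) + (1 - mu) / rho1 mu xi eta + mu / rho2 mu xi eta.

Definition w1 (mu xi xid eta etad : R) : R :=
  let r := rho xi eta in
  let r1 := rho1 mu xi eta in
  let r2 := rho2 mu xi eta in
  let V := Vfun xi xid eta etad in
  - (3/2) * (1 - /3 * mu * (1 - mu)) * r^2 + /8 * V^2
  + (3/2) * ((1 - mu) / r1 + mu / r2) * V
  - /2 * ((1 - mu)^2 / r1^2 + mu^2 / r2^2)
  + mu * (1 - mu) *
    ( (4 * etad + 7 * xi / 2) * (/ r1 - / r2)
      - /2 * eta^2 * (mu / r1^3 + (1 - mu) / r2^3)
      + (3 * mu - 2) / (2 * r1) - / (r1 * r2) + (1 - 3 * mu) / (2 * r2)).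

Definition w (mu c xi xid eta etad : R) : R :=
  w0 mu xi eta + / c^2 * w1 mu xi xid eta etad.

(* "f(xi,eta) = d" : d is the partial derivative dw/dxi at (xi,0,eta,0). *)
Definition is_f (mu c xi eta d : R) : Prop :=
  derivable_pt_lim (fun s => w mu c s 0 eta 0) xi d.
(* "g(xi,eta) = d" : d is the partial derivative dw/deta at (xi,0,eta,0). *)
Definition is_g (mu c xi eta d : R) : Prop :=
  derivable_pt_lim (fun t => w mu c xi 0 t 0) eta d.

Definition mu0 : R := 59729 / 19885499729.
Definition c0 : R := 149896229 / 10 * sqrt (1495978707 / 3317816087784734).

Definition x1 : R := 312498189077 / 625000000000.
Definition x2 : R := 312498095327 / 625000000000.
Definition y1 : R := 4330127145451 / 5000000000000.
Definition y3 : R := 43301267124383 / 50000000000000.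

(* At zero velocity, w is a polynomial in xi, eta, 1/rho1, 1/rho2, mu and 1/c^2, whose
   partial derivatives in xi and eta follow from the chain rule once the derivatives of
   1/rho1 and 1/rho2 are known.  Differentiating this polynomial symbolically and bounding
   the results by dyadic interval arithmetic certifies that on R
     f_xi is in [7/10, 3],  f_eta and g_xi are in [0, 3],  |g_eta| <= 3,
   and that f > 0 > g at (x1, y3) while f < 0 < g at (x2, y1).  The monotonicity of f in
   eta and of g in xi carries these corner signs along the edges, proving (i) and (ii).
   For (iii), f( . , eta) increases strictly, so it has a unique zero xi(eta) in [x2, x1]
   which is Lipschitz in eta; then eta |-> g(xi(eta), eta) is continuous, negative at y3
   and positive at y1, and the intermediate value theorem yields the equilibrium. *)

From Stdlib Require Import Reals Ranalysis5 QArith ZArith Qreals Lra Psatz Lia.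
From Coquelicot Require Import Coquelicot.
Open Scope R_scope.

(** * Polynomial terms and symbolic differentiation *)

Inductive term : Type :=
  | Cst (q : Q)
  | Var (n : nat)
  | Add (s t : term)
  | Mul (s t : term)
  | Opp (t : term).

Arguments Cst q%_Q.

Declare Scope term_scope.
Delimit Scope term_scope with term.
Bind Scope term_scope with term.
Notation "s + t" := (Add s t) : term_scope.
Notation "s - t" := (Add s (Opp t)) : term_scope.
Notation "s * t" := (Mul s t) : term_scope.
Notation "- t" := (Opp t) : term_scope.

Fixpoint eval (e : nat -> R) (t : term) : R :=
  match t with
  | Cst q => Q2R q
  | Var n => e n
  | Add s t => eval e s + eval e t
  | Mul s t => eval e s * eval e t
  | Opp t => - eval e t
  end.

Definition is_cst (c : Q) (t : term) : bool :=
  match t with Cst q => Qeq_bool q c | _ => false end.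

Lemma eval_is_cst e c t : is_cst c t = true -> eval e t = Q2R c.
Proof.
  destruct t as [q| | | |]; try discriminate.
  intro H; apply Qeq_bool_iff in H; exact (Qeq_eqR _ _ H).
Qed.

Definition add_term (s t : term) : term :=
  if is_cst 0 s then t else if is_cst 0 t then s else Add s t.

Definition mul_term (s t : term) : term :=
  if is_cst 0 s || is_cst 0 t then Cst 0
  else if is_cst 1 s then t else if is_cst 1 t then s else Mul s t.

Definition opp_term (t : term) : term := if is_cst 0 t then Cst 0 else Opp t.

Lemma eval_add_term e s t : eval e (add_term s t) = eval e s + eval e t.
Proof.
  unfold add_term.
  destruct (is_cst 0 s) eqn:Hs; [rewrite (eval_is_cst e _ _ Hs), RMicromega.Q2R_0; ring|].
  destruct (is_cst 0 t) eqn:Ht; [rewrite (eval_is_cst e _ _ Ht), RMicromega.Q2R_0; ring|].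
  reflexivity.
Qed.

Lemma eval_mul_term e s t : eval e (mul_term s t) = eval e s * eval e t.
Proof.
  unfold mul_term.
  destruct (is_cst 0 s) eqn:Hs; simpl.
  { rewrite (eval_is_cst e _ _ Hs), RMicromega.Q2R_0; ring. }
  destruct (is_cst 0 t) eqn:Ht; simpl.
  { rewrite (eval_is_cst e _ _ Ht), RMicromega.Q2R_0; ring. }
  destruct (is_cst 1 s) eqn:H1s; [rewrite (eval_is_cst e _ _ H1s), RMicromega.Q2R_1; ring|].
  destruct (is_cst 1 t) eqn:H1t; [rewrite (eval_is_cst e _ _ H1t), RMicromega.Q2R_1; ring|].
  reflexivity.
Qed.

Lemma eval_opp_term e t : eval e (opp_term t) = - eval e t.
Proof.
  unfold opp_term.
  destruct (is_cst 0 t) eqn:Ht; simpl; [|reflexivity].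
  rewrite (eval_is_cst e _ _ Ht), RMicromega.Q2R_0; ring.
Qed.

Fixpoint deriv (dv : nat -> term) (t : term) : term :=
  match t with
  | Cst _ => Cst 0
  | Var n => dv n
  | Add s t => add_term (deriv dv s) (deriv dv t)
  | Mul s t => add_term (mul_term (deriv dv s) t) (mul_term s (deriv dv t))
  | Opp t => opp_term (deriv dv t)
  end.

Lemma deriv_correct (dv : nat -> term) (e : R -> nat -> R) (x : R) :
  (forall n, derivable_pt_lim (fun s => e s n) x (eval (e x) (dv n))) ->
  forall t, derivable_pt_lim (fun s => eval (e s) t) x (eval (e x) (deriv dv t)).
Proof.
  intros Hvar t.
  induction t as [q|n|a IHa b IHb|a IHa b IHb|a IHa]; simpl.
  - rewrite RMicromega.Q2R_0. apply derivable_pt_lim_const.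
  - apply Hvar.
  - rewrite eval_add_term.
    exact (derivable_pt_lim_plus (fun s => eval (e s) a) (fun s => eval (e s) b) _ _ _ IHa IHb).
  - rewrite eval_add_term, !eval_mul_term.
    exact (derivable_pt_lim_mult (fun s => eval (e s) a) (fun s => eval (e s) b) _ _ _ IHa IHb).
  - rewrite eval_opp_term.
    exact (derivable_pt_lim_opp (fun s => eval (e s) a) _ _ IHa).
Qed.

(** * Dyadic interval arithmetic *)

Lemma mul_lower_bound a b c d x y m :
  a <= x <= b -> c <= y <= d ->
  m <= a * c -> m <= a * d -> m <= b * c -> m <= b * d -> m <= x * y.
Proof.
  intros [Hax Hxb] [Hcy Hyd] Hac Had Hbc Hbd.
  destruct (Rle_dec 0 y) as [Hy|Hy].
  - assert (Hxy : a * y <= x * y) by nra.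
    destruct (Rle_dec 0 a); nra.
  - assert (Hxy : b * y <= x * y) by nra.
    destruct (Rle_dec 0 b); nra.
Qed.

Lemma mul_upper_bound a b c d x y m :
  a <= x <= b -> c <= y <= d ->
  a * c <= m -> a * d <= m -> b * c <= m -> b * d <= m -> x * y <= m.
Proof.
  intros Hx Hy Hac Had Hbc Hbd.
  enough (- m <= - x * y) by lra.
  apply (mul_lower_bound (- b) (- a) c d); lra.
Qed.

Lemma le_inv_sqrt u A : 0 <= u -> 0 < A -> u ^ 2 * A <= 1 -> u <= / sqrt A.
Proof.
  intros Hu HA H. rewrite <- sqrt_inv, <- (sqrt_pow2 u Hu). apply sqrt_le_1_alt.
  apply Rmult_le_reg_r with A; [exact HA|]. rewrite Rinv_l by lra. lra.
Qed.

Lemma inv_sqrt_le u A : 0 <= u -> 0 < A -> 1 <= u ^ 2 * A -> / sqrt A <= u.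
Proof.
  intros Hu HA H. rewrite <- sqrt_inv, <- (sqrt_pow2 u Hu). apply sqrt_le_1_alt.
  apply Rmult_le_reg_r with A; [exact HA|]. rewrite Rinv_l by lra. lra.
Qed.

Definition dyad (E z : Z) : R := IZR z / IZR (2 ^ E).

Definition enclosed (E : Z) (i : Z * Z) (x : R) : Prop :=
  dyad E (fst i) <= x <= dyad E (snd i).

Section DyadicIntervals.

Variable E : Z.
Hypothesis E_ge0 : (0 <= E)%Z.

Lemma pow2_Zpos : (0 < 2 ^ E)%Z.
Proof. apply Z.pow_pos_nonneg; lia. Qed.

Lemma pow2_IZR_pos : 0 < IZR (2 ^ E).
Proof. apply IZR_lt, pow2_Zpos. Qed.

Lemma dyad_div_le n d : (0 < d)%Z -> dyad E (n / d) <= IZR n / (IZR d * IZR (2 ^ E)).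
Proof.
  intro Hd.
  assert (Hq : IZR d * IZR (n / d) <= IZR n)
    by (rewrite <- mult_IZR; apply IZR_le, Z.mul_div_le; exact Hd).
  assert (HD : 0 < IZR d) by (apply IZR_lt; exact Hd).
  pose proof pow2_IZR_pos as HS.
  unfold dyad. apply Rmult_le_reg_r with (IZR d * IZR (2 ^ E)); [nra|].
  replace (IZR (n / d) / IZR (2 ^ E) * (IZR d * IZR (2 ^ E)))
    with (IZR d * IZR (n / d)) by (field; lra).
  replace (IZR n / (IZR d * IZR (2 ^ E)) * (IZR d * IZR (2 ^ E))) with (IZR n) by (field; lra).
  exact Hq.
Qed.

Lemma dyad_div_ge n d : (0 < d)%Z -> IZR n / (IZR d * IZR (2 ^ E)) <= dyad E (- (- n / d)).
Proof.
  intro Hd. pose proof (dyad_div_le (- n) d Hd) as H.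
  unfold dyad in *. rewrite opp_IZR in *. unfold Rdiv in *. lra.
Qed.

(* [- (- n / d)] is the ceiling of [n / d]: enclosures are always rounded outward. *)
Definition qenclosure (a b : Q) : Z * Z :=
  ((Qnum a * 2 ^ E) / Zpos (Qden a), - (- (Qnum b * 2 ^ E) / Zpos (Qden b)))%Z.

Lemma Q2R_scaled (q : Q) :
  Q2R q = IZR (Qnum q * 2 ^ E) / (IZR (Zpos (Qden q)) * IZR (2 ^ E)).
Proof.
  pose proof pow2_IZR_pos. unfold Q2R. rewrite mult_IZR. field.
  split; [lra | apply not_0_IZR; discriminate].
Qed.

Lemma enclosed_qenclosure a b x : Q2R a <= x <= Q2R b -> enclosed E (qenclosure a b) x.
Proof.
  unfold enclosed, qenclosure; simpl. rewrite (Q2R_scaled a), (Q2R_scaled b). intros [Ha Hb].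
  split.
  - eapply Rle_trans; [apply dyad_div_le; reflexivity | exact Ha].
  - eapply Rle_trans; [exact Hb | apply dyad_div_ge; reflexivity].
Qed.

Definition iadd (i j : Z * Z) : Z * Z := (fst i + fst j, snd i + snd j)%Z.

Definition iopp (i : Z * Z) : Z * Z := (- snd i, - fst i)%Z.

Definition imul (i j : Z * Z) : Z * Z :=
  let p1 := (fst i * fst j)%Z in let p2 := (fst i * snd j)%Z in
  let p3 := (snd i * fst j)%Z in let p4 := (snd i * snd j)%Z in
  (Z.shiftr (Z.min (Z.min p1 p2) (Z.min p3 p4)) E,
   - Z.shiftr (- Z.max (Z.max p1 p2) (Z.max p3 p4)) E)%Z.

Lemma enclosed_add i j x y : enclosed E i x -> enclosed E j y -> enclosed E (iadd i j) (x + y).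
Proof. unfold enclosed, iadd, dyad; simpl. rewrite !plus_IZR. unfold Rdiv. lra. Qed.

Lemma enclosed_opp i x : enclosed E i x -> enclosed E (iopp i) (- x).
Proof. unfold enclosed, iopp, dyad; simpl. rewrite !opp_IZR. unfold Rdiv. lra. Qed.

Lemma dyad_mul p q : dyad E p * dyad E q = IZR (p * q) / (IZR (2 ^ E) * IZR (2 ^ E)).
Proof. pose proof pow2_IZR_pos. unfold dyad. rewrite mult_IZR. field. lra. Qed.

Lemma enclosed_mul i j x y : enclosed E i x -> enclosed E j y -> enclosed E (imul i j) (x * y).
Proof.
  destruct i as [l1 h1], j as [l2 h2]. unfold enclosed, imul; simpl.
  rewrite !Z.shiftr_div_pow2 by exact E_ge0. intros Hx Hy.
  pose proof pow2_IZR_pos as HS.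
  assert (Hcorner : forall m p q : Z, (m <= p * q)%Z ->
            IZR m / (IZR (2 ^ E) * IZR (2 ^ E)) <= dyad E p * dyad E q).
  { intros m p q H. rewrite dyad_mul. apply Rmult_le_compat_r.
    - left. apply Rinv_0_lt_compat. nra.
    - apply IZR_le, H. }
  assert (Hcorner' : forall m p q : Z, (p * q <= m)%Z ->
            dyad E p * dyad E q <= IZR m / (IZR (2 ^ E) * IZR (2 ^ E))).
  { intros m p q H. rewrite dyad_mul. apply Rmult_le_compat_r.
    - left. apply Rinv_0_lt_compat. nra.
    - apply IZR_le, H. }
  split.
  - eapply Rle_trans; [apply dyad_div_le, pow2_Zpos|].
    apply (mul_lower_bound _ _ _ _ _ _ _ Hx Hy); apply Hcorner; lia.
  - eapply Rle_trans; [|apply dyad_div_ge, pow2_Zpos].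
    apply (mul_upper_bound _ _ _ _ _ _ _ Hx Hy); apply Hcorner'; lia.
Qed.

Fixpoint ieval (b : nat -> Z * Z) (t : term) : Z * Z :=
  match t with
  | Cst q => qenclosure q q
  | Var n => b n
  | Add s t => iadd (ieval b s) (ieval b t)
  | Mul s t => imul (ieval b s) (ieval b t)
  | Opp t => iopp (ieval b t)
  end.

Lemma ieval_correct b e :
  (forall n, enclosed E (b n) (e n)) -> forall t, enclosed E (ieval b t) (eval e t).
Proof.
  intros Hb t. induction t; simpl.
  - apply enclosed_qenclosure. lra.
  - apply Hb.
  - apply enclosed_add; assumption.
  - apply enclosed_mul; assumption.
  - apply enclosed_opp; assumption.
Qed.

Definition within (i : Z * Z) (lo hi : Q) : bool :=
  Qle_bool lo (fst i # Z.to_pos (2 ^ E)) && Qle_bool (snd i # Z.to_pos (2 ^ E)) hi.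

Lemma dyad_Q2R z : dyad E z = Q2R (z # Z.to_pos (2 ^ E)).
Proof. unfold dyad, Q2R; simpl. rewrite Z2Pos.id by apply pow2_Zpos. reflexivity. Qed.

Lemma within_correct i lo hi x :
  enclosed E i x -> within i lo hi = true -> Q2R lo <= x <= Q2R hi.
Proof.
  unfold enclosed, within. rewrite !dyad_Q2R. intros Hx Hw.
  apply andb_prop in Hw as [Hlo Hhi].
  apply Qle_bool_iff, Qle_Rle in Hlo. apply Qle_bool_iff, Qle_Rle in Hhi. lra.
Qed.

Lemma dyad_le_inv_sqrt (b : Q) A k : (0 <= k)%Z -> 0 < A -> A <= Q2R b ->
  (k * k * Qnum b <= 2 ^ E * 2 ^ E * Zpos (Qden b))%Z -> dyad E k <= / sqrt A.
Proof.
  destruct b as [nb db]. unfold Q2R, dyad; simpl. intros Hk0 HA HAb Hk.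
  apply IZR_le in Hk. rewrite !mult_IZR in Hk.
  pose proof pow2_IZR_pos as HS.
  assert (Hdb : 0 < IZR (Zpos db)) by (apply IZR_lt; lia).
  apply le_inv_sqrt; [| exact HA |].
  - apply Rmult_le_pos; [apply IZR_le, Hk0 | left; apply Rinv_0_lt_compat, HS].
  - apply Rle_trans with ((IZR k / IZR (2 ^ E)) ^ 2 * (IZR nb * / IZR (Zpos db))).
    + apply Rmult_le_compat_l; [apply pow2_ge_0 | exact HAb].
    + apply Rmult_le_reg_r with (IZR (2 ^ E) * IZR (2 ^ E) * IZR (Zpos db));
        [repeat apply Rmult_lt_0_compat; assumption|].
      replace ((IZR k / IZR (2 ^ E)) ^ 2 * (IZR nb * / IZR (Zpos db))
               * (IZR (2 ^ E) * IZR (2 ^ E) * IZR (Zpos db)))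
        with (IZR k * IZR k * IZR nb) by (field; lra).
      lra.
Qed.

Lemma inv_sqrt_le_dyad (a : Q) A k : (0 <= k)%Z -> 0 < A -> Q2R a <= A ->
  (2 ^ E * 2 ^ E * Zpos (Qden a) <= k * k * Qnum a)%Z -> / sqrt A <= dyad E k.
Proof.
  destruct a as [na da]. unfold Q2R, dyad; simpl. intros Hk0 HA HaA Hk.
  apply IZR_le in Hk. rewrite !mult_IZR in Hk.
  pose proof pow2_IZR_pos as HS.
  assert (Hda : 0 < IZR (Zpos da)) by (apply IZR_lt; lia).
  apply inv_sqrt_le; [| exact HA |].
  - apply Rmult_le_pos; [apply IZR_le, Hk0 | left; apply Rinv_0_lt_compat, HS].
  - apply Rle_trans with ((IZR k / IZR (2 ^ E)) ^ 2 * (IZR na * / IZR (Zpos da))).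
    + apply Rmult_le_reg_r with (IZR (2 ^ E) * IZR (2 ^ E) * IZR (Zpos da));
        [repeat apply Rmult_lt_0_compat; assumption|].
      replace ((IZR k / IZR (2 ^ E)) ^ 2 * (IZR na * / IZR (Zpos da))
               * (IZR (2 ^ E) * IZR (2 ^ E) * IZR (Zpos da)))
        with (IZR k * IZR k * IZR na) by (field; lra).
      lra.
    + apply Rmult_le_compat_l; [apply pow2_ge_0 | exact HaA].
Qed.

(* The lower bound [k] satisfies [k^2 b <= 4^E] and the upper one [4^E <= k^2 a]. *)
Definition inv_sqrt_enclosure (a b : Q) : Z * Z :=
  (Z.sqrt (2 ^ E * 2 ^ E * Zpos (Qden b) / Qnum b),
   Z.sqrt (2 ^ E * 2 ^ E * Zpos (Qden a) / Qnum a) + 1)%Z.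

Lemma enclosed_inv_sqrt a b A :
  (0 < a)%Q -> Q2R a <= A <= Q2R b -> enclosed E (inv_sqrt_enclosure a b) (/ sqrt A).
Proof.
  intros Ha [HaA HAb].
  assert (HA : 0 < A) by (apply Qlt_Rlt in Ha; rewrite RMicromega.Q2R_0 in Ha; lra).
  assert (Hna : (0 < Qnum a)%Z) by (unfold Qlt in Ha; simpl in Ha; lia).
  assert (Hnb : (0 < Qnum b)%Z).
  { apply lt_IZR. destruct b as [nb db]. unfold Q2R in HAb; simpl in HAb |- *.
    assert (0 < IZR (Zpos db)) by (apply IZR_lt; lia).
    apply Rmult_lt_reg_r with (/ IZR (Zpos db)); [apply Rinv_0_lt_compat; assumption | lra]. }
  set (N := (2 ^ E * 2 ^ E)%Z).
  assert (HN : (0 <= N)%Z) by (pose proof pow2_Zpos; unfold N; lia).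
  unfold enclosed, inv_sqrt_enclosure; simpl; fold N. split.
  - apply (dyad_le_inv_sqrt b); [apply Z.sqrt_nonneg | exact HA | exact HAb |].
    assert (H0 : (0 <= N * Zpos (Qden b) / Qnum b)%Z) by (apply Z.div_pos; lia).
    pose proof (Z.sqrt_spec _ H0) as [Hs _].
    pose proof (Z.mul_div_le (N * Zpos (Qden b)) (Qnum b) Hnb). nia.
  - apply (inv_sqrt_le_dyad a); [pose proof (Z.sqrt_nonneg (N * Zpos (Qden a) / Qnum a)); lia
                                | exact HA | exact HaA |].
    assert (H0 : (0 <= N * Zpos (Qden a) / Qnum a)%Z) by (apply Z.div_pos; lia).
    pose proof (Z.sqrt_spec _ H0) as [_ Hs].
    pose proof (Z.mul_succ_div_gt (N * Zpos (Qden a)) (Qnum a) Hna).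
    rewrite <- !Z.add_1_r in *. nia.
Qed.

End DyadicIntervals.

(** * A Poincare-Miranda lemma for maps monotone in one variable *)

Lemma increment_bounds f f' a b lo hi : a <= b ->
  (forall c, a <= c <= b -> derivable_pt_lim f c (f' c) /\ lo <= f' c <= hi) ->
  lo * (b - a) <= f b - f a <= hi * (b - a).
Proof.
  intros Hab H. destruct (Rle_lt_or_eq_dec _ _ Hab) as [Hlt|<-]; [|lra].
  destruct (MVT_cor2 f f' a b Hlt (fun c Hc => proj1 (H c Hc))) as [c [-> Hc]].
  destruct (H c (conj (Rlt_le _ _ (proj1 Hc)) (Rlt_le _ _ (proj2 Hc)))) as [_ [Hlo Hhi]].
  split; apply Rmult_le_compat_r; lra.
Qed.

Lemma lipschitz_of_deriv_bound f f' a b L s t :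
  (forall c, a <= c <= b -> derivable_pt_lim f c (f' c) /\ - L <= f' c <= L) ->
  a <= s <= b -> a <= t <= b -> Rabs (f t - f s) <= L * Rabs (t - s).
Proof.
  intros H Hs Ht.
  destruct (Rle_dec s t) as [Hst|Hst].
  - assert (Hsub : forall c, s <= c <= t -> derivable_pt_lim f c (f' c) /\ - L <= f' c <= L)
      by (intros c Hc; apply H; lra).
    pose proof (increment_bounds f f' s t _ _ Hst Hsub).
    rewrite (Rabs_pos_eq (t - s)) by lra. apply Rabs_le. lra.
  - assert (Hsub : forall c, t <= c <= s -> derivable_pt_lim f c (f' c) /\ - L <= f' c <= L)
      by (intros c Hc; apply H; lra).
    pose proof (increment_bounds f f' t s _ _ ltac:(lra) Hsub).
    rewrite (Rabs_left (t - s)) by lra. apply Rabs_le. lra.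
Qed.

Lemma lipschitz_continuity_pt f L z :
  (forall s t, Rabs (f t - f s) <= L * Rabs (t - s)) -> continuity_pt f z.
Proof.
  intros Hf eps Heps. exists (eps / (Rabs L + 1)). split.
  - apply Rdiv_lt_0_compat; [lra | pose proof (Rabs_pos L); lra].
  - intros s [_ Hs]. simpl in *. unfold Rdist in *.
    pose proof (Rabs_pos L). pose proof (Rabs_pos (s - z)). pose proof (Rle_abs L).
    apply Rle_lt_trans with ((Rabs L + 1) * Rabs (s - z)); [specialize (Hf z s); nra|].
    apply Rmult_lt_reg_r with (/ (Rabs L + 1)); [apply Rinv_0_lt_compat; lra|].
    replace ((Rabs L + 1) * Rabs (s - z) * / (Rabs L + 1)) with (Rabs (s - z)) by (field; lra).
    exact Hs.
Qed.

Definition clamp (a b s : R) : R := Rmax a (Rmin s b).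

Lemma clamp_in a b s : a <= b -> a <= clamp a b s <= b.
Proof. intro. unfold clamp, Rmax, Rmin; repeat destruct Rle_dec; lra. Qed.

Lemma clamp_id a b s : a <= s <= b -> clamp a b s = s.
Proof. intro. unfold clamp, Rmax, Rmin; repeat destruct Rle_dec; lra. Qed.

Lemma clamp_contraction a b s t : Rabs (clamp a b t - clamp a b s) <= Rabs (t - s).
Proof. unfold clamp, Rmax, Rmin, Rabs; repeat destruct Rle_dec; repeat destruct Rcase_abs; lra. Qed.

(* Clamping extends [f] from [[a, b]] to a Lipschitz function on all of [R], which
   [IVT_interv] needs since [continuity_pt] is two-sided at the endpoints. *)
Lemma ivt_lipschitz f a b L : a < b ->
  (forall s t, a <= s <= b -> a <= t <= b -> Rabs (f t - f s) <= L * Rabs (t - s)) ->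
  f a < 0 -> 0 < f b -> {x | a <= x <= b /\ f x = 0}.
Proof.
  intros Hab Hf Ha Hb.
  set (g s := f (clamp a b s)).
  assert (Hg : forall s t, Rabs (g t - g s) <= Rabs L * Rabs (t - s)).
  { intros s t. unfold g.
    pose proof (clamp_in a b s ltac:(lra)). pose proof (clamp_in a b t ltac:(lra)).
    pose proof (clamp_contraction a b s t). pose proof (Rabs_pos (clamp a b t - clamp a b s)).
    pose proof (Rle_abs L). pose proof (Rabs_pos L).
    specialize (Hf (clamp a b s) (clamp a b t) ltac:(assumption) ltac:(assumption)). nra. }
  assert (Hga : g a = f a) by (unfold g; rewrite clamp_id; lra).
  assert (Hgb : g b = f b) by (unfold g; rewrite clamp_id; lra).
  destruct (IVT_interv g a b (fun z _ => lipschitz_continuity_pt g _ z Hg) Hab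
              ltac:(lra) ltac:(lra)) as [x [Hx Hgx]].
  exists x. split; [exact Hx|]. unfold g in Hgx. rewrite clamp_id in Hgx; assumption.
Qed.

Section MonotoneMiranda.

Variables (F G Fx Fy Gx Gy : R -> R -> R) (a b c d m L : R).

Hypothesis a_lt_b : a < b.
Hypothesis c_lt_d : c < d.
Hypothesis m_pos : 0 < m.
Hypothesis F_x_deriv : forall x y, a <= x <= b -> c <= y <= d ->
  derivable_pt_lim (fun s => F s y) x (Fx x y) /\ m <= Fx x y <= L.
Hypothesis F_y_deriv : forall x y, a <= x <= b -> c <= y <= d ->
  derivable_pt_lim (fun s => F x s) y (Fy x y) /\ - L <= Fy x y <= L.
Hypothesis G_x_deriv : forall x y, a <= x <= b -> c <= y <= d ->
  derivable_pt_lim (fun s => G s y) x (Gx x y) /\ - L <= Gx x y <= L.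
Hypothesis G_y_deriv : forall x y, a <= x <= b -> c <= y <= d ->
  derivable_pt_lim (fun s => G x s) y (Gy x y) /\ - L <= Gy x y <= L.
Hypothesis F_left : forall y, c <= y <= d -> F a y < 0.
Hypothesis F_right : forall y, c <= y <= d -> 0 < F b y.
Hypothesis G_bottom : forall x, a <= x <= b -> G x c < 0.
Hypothesis G_top : forall x, a <= x <= b -> 0 < G x d.

Lemma lipschitz_constant_pos : 0 < L.
Proof. pose proof (F_x_deriv a c ltac:(lra) ltac:(lra)). lra. Qed.

Lemma F_x_lipschitz x x' y : a <= x <= b -> a <= x' <= b -> c <= y <= d ->
  Rabs (F x' y - F x y) <= L * Rabs (x' - x).
Proof.
  intros Hx Hx' Hy. apply (lipschitz_of_deriv_bound (fun s => F s y) (fun s => Fx s y) a b);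
    [|assumption..].
  intros s Hs. destruct (F_x_deriv s y Hs Hy) as [D B]. split; [exact D | lra].
Qed.

Lemma F_x_expanding x x' y : a <= x <= b -> a <= x' <= b -> c <= y <= d ->
  m * Rabs (x' - x) <= Rabs (F x' y - F x y).
Proof.
  intros Hx Hx' Hy.
  assert (Hinc : forall u v, a <= u <= v -> v <= b -> m * (v - u) <= F v y - F u y).
  { intros u v Huv Hv.
    refine (proj1 (increment_bounds (fun s => F s y) (fun s => Fx s y) u v m L _ _));
      [lra|]. intros s Hs. apply F_x_deriv; [lra | exact Hy]. }
  destruct (Rle_dec x x').
  - pose proof (Hinc x x' ltac:(lra) ltac:(lra)).
    rewrite (Rabs_pos_eq (x' - x)), (Rabs_pos_eq (F x' y - F x y)) by nra. lra.
  - pose proof (Hinc x' x ltac:(lra) ltac:(lra)).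
    rewrite (Rabs_left (x' - x)) by lra. rewrite (Rabs_left1 (F x' y - F x y)) by nra. lra.
Qed.

Lemma F_y_lipschitz x y y' : a <= x <= b -> c <= y <= d -> c <= y' <= d ->
  Rabs (F x y' - F x y) <= L * Rabs (y' - y).
Proof.
  intros Hx Hy Hy'. apply (lipschitz_of_deriv_bound (fun s => F x s) (fun s => Fy x s) c d);
    [|assumption..].
  intros s Hs. apply F_y_deriv; assumption.
Qed.

Lemma G_x_lipschitz x x' y : a <= x <= b -> a <= x' <= b -> c <= y <= d ->
  Rabs (G x' y - G x y) <= L * Rabs (x' - x).
Proof.
  intros Hx Hx' Hy. apply (lipschitz_of_deriv_bound (fun s => G s y) (fun s => Gx s y) a b);
    [|assumption..].
  intros s Hs. apply G_x_deriv; assumption.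
Qed.

Lemma G_y_lipschitz x y y' : a <= x <= b -> c <= y <= d -> c <= y' <= d ->
  Rabs (G x y' - G x y) <= L * Rabs (y' - y).
Proof.
  intros Hx Hy Hy'. apply (lipschitz_of_deriv_bound (fun s => G x s) (fun s => Gy x s) c d);
    [|assumption..].
  intros s Hs. apply G_y_deriv; assumption.
Qed.

Lemma root_x_exists y : {x | a <= x <= b /\ F x (clamp c d y) = 0}.
Proof.
  pose proof (clamp_in c d y ltac:(lra)) as Hy.
  apply (ivt_lipschitz (fun x => F x (clamp c d y)) a b L a_lt_b).
  - intros s t Hs Ht. apply F_x_lipschitz; assumption.
  - apply F_left, Hy.
  - apply F_right, Hy.
Qed.

Definition root_x (y : R) : R := proj1_sig (root_x_exists y).

Lemma root_x_in y : a <= root_x y <= b.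
Proof. exact (proj1 (proj2_sig (root_x_exists y))). Qed.

Lemma F_root_x y : F (root_x y) (clamp c d y) = 0.
Proof. exact (proj2 (proj2_sig (root_x_exists y))). Qed.

Lemma root_x_lipschitz y y' : m * Rabs (root_x y' - root_x y) <= L * Rabs (y' - y).
Proof.
  pose proof (root_x_in y) as Hp. pose proof (root_x_in y') as Hq.
  pose proof (clamp_in c d y ltac:(lra)) as Hy. pose proof (clamp_in c d y' ltac:(lra)) as Hy'.
  assert (Hexp : m * Rabs (root_x y' - root_x y) <= Rabs (F (root_x y') (clamp c d y))).
  { pose proof (F_x_expanding _ _ _ Hp Hq Hy) as H. rewrite F_root_x, Rminus_0_r in H. exact H. }
  assert (HFy : Rabs (F (root_x y') (clamp c d y)) <= L * Rabs (clamp c d y - clamp c d y')).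
  { pose proof (F_y_lipschitz _ _ _ Hq Hy' Hy) as H. rewrite F_root_x, Rminus_0_r in H. exact H. }
  pose proof (clamp_contraction c d y' y) as Hclamp. rewrite (Rabs_minus_sym y) in Hclamp.
  pose proof lipschitz_constant_pos. nra.
Qed.

Definition G_on_roots (y : R) : R := G (root_x y) (clamp c d y).

Lemma G_on_roots_lipschitz y y' :
  Rabs (G_on_roots y' - G_on_roots y) <= (L * L / m + L) * Rabs (y' - y).
Proof.
  unfold G_on_roots.
  pose proof (root_x_in y) as Hp. pose proof (root_x_in y') as Hq.
  pose proof (clamp_in c d y ltac:(lra)) as Hy. pose proof (clamp_in c d y' ltac:(lra)) as Hy'.
  pose proof (G_x_lipschitz _ _ _ Hp Hq Hy') as HGx.
  pose proof (G_y_lipschitz _ _ _ Hp Hy Hy') as HGy.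
  pose proof (root_x_lipschitz y y') as Hroot.
  pose proof (clamp_contraction c d y y') as Hclamp.
  pose proof (Rabs_triang (G (root_x y') (clamp c d y') - G (root_x y) (clamp c d y'))
                          (G (root_x y) (clamp c d y') - G (root_x y) (clamp c d y))) as Htri.
  replace (G (root_x y') (clamp c d y') - G (root_x y) (clamp c d y')
           + (G (root_x y) (clamp c d y') - G (root_x y) (clamp c d y)))
    with (G (root_x y') (clamp c d y') - G (root_x y) (clamp c d y)) in Htri by ring.
  pose proof lipschitz_constant_pos.
  assert (Hroot' : Rabs (root_x y' - root_x y) <= L / m * Rabs (y' - y)).
  { apply Rmult_le_reg_l with m; [exact m_pos|].
    replace (m * (L / m * Rabs (y' - y))) with (L * Rabs (y' - y)) by (field; lra). exact Hroot. }
  replace ((L * L / m + L) * Rabs (y' - y)) with (L * (L / m * Rabs (y' - y)) + L * Rabs (y' - y))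
    by (field; lra).
  nra.
Qed.

Lemma common_zero_in_box : exists x y, a <= x <= b /\ c <= y <= d /\ F x y = 0 /\ G x y = 0.
Proof.
  assert (Hbot : G_on_roots c < 0)
    by (unfold G_on_roots; rewrite clamp_id by lra; apply G_bottom, root_x_in).
  assert (Htop : 0 < G_on_roots d)
    by (unfold G_on_roots; rewrite clamp_id by lra; apply G_top, root_x_in).
  destruct (IVT_interv G_on_roots c d
              (fun z _ => lipschitz_continuity_pt _ _ z G_on_roots_lipschitz) c_lt_d Hbot Htop)
    as [y [Hy HG]].
  exists (root_x y), y. unfold G_on_roots in HG.
  pose proof (F_root_x y) as HF. rewrite clamp_id in HF, HG by exact Hy.
  repeat split; try apply root_x_in; tauto.
Qed.

End MonotoneMiranda.

(** * The potential at zero velocity as a term *)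

(* Term variables 0..5 stand for xi, eta, 1/rho1, 1/rho2, mu and 1/c^2. *)
Definition env (x y : R) (n : nat) : R :=
  match n with
  | 0%nat => x
  | 1%nat => y
  | 2%nat => / rho1 mu0 x y
  | 3%nat => / rho2 mu0 x y
  | 4%nat => mu0
  | _ => / c0 ^ 2
  end.

Definition X : term := Var 0.
Definition Y : term := Var 1.
Definition U1 : term := Var 2.
Definition U2 : term := Var 3.
Definition Mu : term := Var 4.
Definition K : term := Var 5.

Definition sq (t : term) : term := (t * t)%term.
Definition cube (t : term) : term := (t * t * t)%term.

(* At zero velocity V = rho^2 = xi^2 + eta^2, so both are the term P. *)
Definition w_term : term :=
  let P := (sq X + sq Y)%term in
  let Mu' := (Cst 1 - Mu)%term in
  (Cst (1#2) * P + Mu' * U1 + Mu * U2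
   + K * (- Cst (3#2) * (Cst 1 - Cst (1#3) * Mu * Mu') * P
          + Cst (1#8) * sq P
          + Cst (3#2) * (Mu' * U1 + Mu * U2) * P
          - Cst (1#2) * (sq Mu' * sq U1 + sq Mu * sq U2)
          + Mu * Mu' * (Cst (7#2) * X * (U1 - U2)
                        - Cst (1#2) * sq Y * (Mu * cube U1 + Mu' * cube U2)
                        + Cst (1#2) * (Cst 3 * Mu - Cst 2) * U1
                        - U1 * U2
                        + Cst (1#2) * (Cst 1 - Cst 3 * Mu) * U2)))%term.

(* d(1/rho1)/dxi = - (xi + mu) / rho1^3, and similarly for the other variables. *)
Definition dx (n : nat) : term :=
  match n with
  | 0%nat => Cst 1
  | 2%nat => (- (X + Mu) * cube U1)%term
  | 3%nat => (- (X + Mu - Cst 1) * cube U2)%term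
  | _ => Cst 0
  end.

Definition dy (n : nat) : term :=
  match n with
  | 1%nat => Cst 1
  | 2%nat => (- Y * cube U1)%term
  | 3%nat => (- Y * cube U2)%term
  | _ => Cst 0
  end.

Definition f_term : term := deriv dx w_term.
Definition g_term : term := deriv dy w_term.

Definition off_primaries (x y : R) : Prop :=
  0 < (x + mu0) ^ 2 + y ^ 2 /\ 0 < (x + mu0 - 1) ^ 2 + y ^ 2.

Lemma off_primaries_of_y_neq0 x y : y <> 0 -> off_primaries x y.
Proof.
  intro Hy. assert (0 < y ^ 2) by (apply pow2_gt_0; exact Hy).
  split; pose proof (pow2_ge_0 (x + mu0)); pose proof (pow2_ge_0 (x + mu0 - 1)); lra.
Qed.

Lemma off_primaries_of_x x y : x + mu0 <> 0 -> x + mu0 <> 1 -> off_primaries x y.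
Proof.
  intros H0 H1. pose proof (pow2_ge_0 y).
  assert (0 < (x + mu0) ^ 2) by (apply pow2_gt_0; exact H0).
  assert (0 < (x + mu0 - 1) ^ 2) by (apply pow2_gt_0; lra).
  split; lra.
Qed.

Lemma fold_pow2 (z : R) : z * (z * 1) = z ^ 2.
Proof. ring. Qed.

Lemma env_deriv_x x y : off_primaries x y ->
  forall n, derivable_pt_lim (fun s => env s y n) x (eval (env x y) (dx n)).
Proof.
  intros [H1 H2] n.
  destruct n as [|[|[|[|n]]]]; simpl; rewrite ?RMicromega.Q2R_1, ?RMicromega.Q2R_0.
  - apply derivable_pt_lim_id.
  - apply (derivable_pt_lim_const y).
  - apply is_derive_Reals. unfold rho1.
    assert (Hs : sqrt ((x + mu0) ^ 2 + y ^ 2) <> 0) by (apply Rgt_not_eq, sqrt_lt_R0; lra).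
    auto_derive; rewrite ?fold_pow2.
    + split; [lra | split; auto].
    + field; auto.
  - apply is_derive_Reals. unfold rho2.
    assert (Hs : sqrt ((x + mu0 - 1) ^ 2 + y ^ 2) <> 0) by (apply Rgt_not_eq, sqrt_lt_R0; lra).
    auto_derive; rewrite ?fold_pow2; replace (x + mu0 + - (1)) with (x + mu0 - 1) by ring.
    + split; [lra | split; auto].
    + field; auto.
  - destruct n; apply derivable_pt_lim_const.
Qed.

Lemma env_deriv_y x y : off_primaries x y ->
  forall n, derivable_pt_lim (fun s => env x s n) y (eval (env x y) (dy n)).
Proof.
  intros [H1 H2] n.
  destruct n as [|[|[|[|n]]]]; simpl; rewrite ?RMicromega.Q2R_1, ?RMicromega.Q2R_0.
  - apply (derivable_pt_lim_const x).
  - apply derivable_pt_lim_id.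
  - apply is_derive_Reals. unfold rho1.
    assert (Hs : sqrt ((x + mu0) ^ 2 + y ^ 2) <> 0) by (apply Rgt_not_eq, sqrt_lt_R0; lra).
    auto_derive; rewrite ?fold_pow2.
    + split; [lra | split; auto].
    + field; auto.
  - apply is_derive_Reals. unfold rho2.
    assert (Hs : sqrt ((x + mu0 - 1) ^ 2 + y ^ 2) <> 0) by (apply Rgt_not_eq, sqrt_lt_R0; lra).
    auto_derive; rewrite ?fold_pow2.
    + split; [lra | split; auto].
    + field; auto.
  - destruct n; apply derivable_pt_lim_const.
Qed.

Lemma eval_deriv_x t x y : off_primaries x y ->
  derivable_pt_lim (fun s => eval (env s y) t) x (eval (env x y) (deriv dx t)).
Proof. intro H. exact (deriv_correct dx (fun s => env s y) x (env_deriv_x x y H) t). Qed.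

Lemma eval_deriv_y t x y : off_primaries x y ->
  derivable_pt_lim (fun s => eval (env x s) t) y (eval (env x y) (deriv dy t)).
Proof. intro H. exact (deriv_correct dy (fun s => env x s) y (env_deriv_y x y H) t). Qed.

Lemma c0_neq0 : c0 <> 0.
Proof.
  unfold c0. assert (0 < sqrt (1495978707 / 3317816087784734)) by (apply sqrt_lt_R0; lra). nra.
Qed.

Lemma w_eval x y : off_primaries x y -> w mu0 c0 x 0 y 0 = eval (env x y) w_term.
Proof.
  intros [H1 H2].
  assert (rho1 mu0 x y <> 0) by (apply Rgt_not_eq, sqrt_lt_R0; exact H1).
  assert (rho2 mu0 x y <> 0) by (apply Rgt_not_eq, sqrt_lt_R0; exact H2).
  assert (Hrho : rho x y ^ 2 = x ^ 2 + y ^ 2) by (apply pow2_sqrt; nra).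
  pose proof c0_neq0.
  unfold w, w0, w1, Vfun. rewrite Hrho. simpl. unfold Q2R; simpl. field. auto.
Qed.

Definition F (x y : R) : R := eval (env x y) f_term.
Definition G (x y : R) : R := eval (env x y) g_term.

Lemma is_f_F x y : y <> 0 -> is_f mu0 c0 x y (F x y).
Proof.
  intro Hy. unfold is_f, F, f_term. apply is_derive_Reals.
  apply is_derive_ext with (f := fun s => eval (env s y) w_term).
  { intro s. symmetry. apply w_eval, off_primaries_of_y_neq0, Hy. }
  apply is_derive_Reals, eval_deriv_x, off_primaries_of_y_neq0, Hy.
Qed.

Lemma is_g_G x y : x + mu0 <> 0 -> x + mu0 <> 1 -> is_g mu0 c0 x y (G x y).
Proof.
  intros H0 H1. unfold is_g, G, g_term. apply is_derive_Reals.
  apply is_derive_ext with (f := fun s => eval (env x s) w_term).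
  { intro s. symmetry. apply w_eval, off_primaries_of_x; assumption. }
  apply is_derive_Reals, eval_deriv_y, off_primaries_of_x; assumption.
Qed.

(** * Certified bounds on the rectangle *)

Definition muq : Q := 59729 # 19885499729.
Definition kq : Q := (100 * 3317816087784734 # 1) / (149896229 * 149896229 * 1495978707 # 1).
Definition x1q : Q := 312498189077 # 625000000000.
Definition x2q : Q := 312498095327 # 625000000000.
Definition y1q : Q := 4330127145451 # 5000000000000.
Definition y3q : Q := 43301267124383 # 50000000000000.

Definition hypot2 (u v : Q) : Q := u * u + v * v.

(* On a box where xi + mu >= 0, 1 - mu - xi >= 0 and eta > 0 (checked by [box_check]),
   rho1^2 and rho2^2 are monotone in each coordinate, hence bounded by their values at
   opposite corners.  The enclosures are let-bound so that evaluation computes them once,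
   not once per occurrence of a variable. *)
Definition box_env (E : Z) (xl xh yl yh : Q) : nat -> Z * Z :=
  let ex := qenclosure E xl xh in
  let ey := qenclosure E yl yh in
  let eu1 := inv_sqrt_enclosure E (hypot2 (xl + muq) yl) (hypot2 (xh + muq) yh) in
  let eu2 := inv_sqrt_enclosure E (hypot2 (1 - muq - xh) yl) (hypot2 (1 - muq - xl) yh) in
  let emu := qenclosure E muq muq in
  let ek := qenclosure E kq kq in
  fun n => match n with
           | 0%nat => ex | 1%nat => ey | 2%nat => eu1 | 3%nat => eu2 | 4%nat => emu | _ => ek
           end.

Definition box_check (E : Z) (xl xh yl yh : Q) (t : term) (lo hi : Q) : bool :=
  Qle_bool 0 (xl + muq) && Qle_bool 0 (1 - muq - xh) && negb (Qle_bool yl 0)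
  && within E (ieval E (box_env E xl xh yl yh) t) lo hi.

Lemma Q2R_muq : Q2R muq = mu0.
Proof. unfold Q2R, mu0; simpl. lra. Qed.

Lemma Q2R_kq : Q2R kq = / c0 ^ 2.
Proof. unfold c0. rewrite Rpow_mult_distr, pow2_sqrt by lra. unfold kq, Q2R. simpl. field. Qed.

Lemma Q2R_x1q : Q2R x1q = x1. Proof. unfold Q2R, x1; simpl. lra. Qed.
Lemma Q2R_x2q : Q2R x2q = x2. Proof. unfold Q2R, x2; simpl. lra. Qed.
Lemma Q2R_y1q : Q2R y1q = y1. Proof. unfold Q2R, y1; simpl. lra. Qed.
Lemma Q2R_y3q : Q2R y3q = y3. Proof. unfold Q2R, y3; simpl. lra. Qed.

Lemma Q2R_literal n d : Q2R (n # d) = IZR n / IZR (Zpos d).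
Proof. reflexivity. Qed.

Lemma Q2R_hypot2 u v : Q2R (hypot2 u v) = Q2R u ^ 2 + Q2R v ^ 2.
Proof. unfold hypot2. rewrite Q2R_plus, !Q2R_mult. ring. Qed.

Lemma enclosed_inv_hypot E zl zh yl yh z y : (0 <= E)%Z ->
  0 <= Q2R zl -> 0 < Q2R yl -> Q2R zl <= z <= Q2R zh -> Q2R yl <= y <= Q2R yh ->
  enclosed E (inv_sqrt_enclosure E (hypot2 zl yl) (hypot2 zh yh)) (/ sqrt (z ^ 2 + y ^ 2)).
Proof.
  intros HE Hzl Hyl Hz Hy. apply enclosed_inv_sqrt; [exact HE | |].
  - apply Rlt_Qlt. rewrite Q2R_hypot2, RMicromega.Q2R_0. nra.
  - rewrite !Q2R_hypot2. split; nra.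
Qed.

Lemma box_env_correct E xl xh yl yh x y : (0 <= E)%Z ->
  0 <= Q2R xl + mu0 -> 0 <= 1 - mu0 - Q2R xh -> 0 < Q2R yl ->
  Q2R xl <= x <= Q2R xh -> Q2R yl <= y <= Q2R yh ->
  forall n, enclosed E (box_env E xl xh yl yh n) (env x y n).
Proof.
  intros HE Hl Hh Hyl Hx Hy n. destruct n as [|[|[|[|[|n]]]]]; unfold box_env, env; cbv beta zeta iota.
  - apply enclosed_qenclosure; assumption.
  - apply enclosed_qenclosure; assumption.
  - unfold rho1. apply enclosed_inv_hypot; [exact HE | ..]; rewrite ?Q2R_plus, ?Q2R_muq; lra.
  - unfold rho2. replace ((x + mu0 - 1) ^ 2) with ((1 - mu0 - x) ^ 2) by ring.
    apply enclosed_inv_hypot; [exact HE | ..]; unfold Qminus;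
      rewrite ?Q2R_plus, ?Q2R_opp, ?Q2R_muq, ?RMicromega.Q2R_1; lra.
  - apply enclosed_qenclosure; [exact HE|]. rewrite Q2R_muq. lra.
  - apply enclosed_qenclosure; [exact HE|]. rewrite Q2R_kq. lra.
Qed.

Lemma box_check_correct E xl xh yl yh t lo hi x y : (0 <= E)%Z ->
  box_check E xl xh yl yh t lo hi = true ->
  Q2R xl <= x <= Q2R xh -> Q2R yl <= y <= Q2R yh -> Q2R lo <= eval (env x y) t <= Q2R hi.
Proof.
  intros HE Hc Hx Hy. unfold box_check in Hc.
  apply andb_prop in Hc as [Hc Hw]. apply andb_prop in Hc as [Hc Hyl].
  apply andb_prop in Hc as [Hl Hh].
  apply Qle_bool_iff, Qle_Rle in Hl. apply Qle_bool_iff, Qle_Rle in Hh.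
  apply negb_true_iff in Hyl.
  assert (Hyl' : (0 < yl)%Q).
  { apply Qnot_le_lt. intro H. apply Qle_bool_iff in H. congruence. }
  apply Qlt_Rlt in Hyl'.
  unfold Qminus in Hh. rewrite RMicromega.Q2R_0, Q2R_plus, Q2R_muq in Hl.
  rewrite RMicromega.Q2R_0, !Q2R_plus, !Q2R_opp, Q2R_muq, RMicromega.Q2R_1 in Hh.
  rewrite RMicromega.Q2R_0 in Hyl'.
  refine (within_correct E HE _ _ _ _ (ieval_correct E HE _ _ _ t) Hw).
  apply box_env_correct; [exact HE | lra..].
Qed.

Lemma rect_bound t lo hi x y : box_check 64 x2q x1q y3q y1q t lo hi = true ->
  x2 <= x <= x1 -> y3 <= y <= y1 -> Q2R lo <= eval (env x y) t <= Q2R hi.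
Proof.
  intros Hc Hx Hy. apply (box_check_correct 64 x2q x1q y3q y1q); [lia | exact Hc | |];
    rewrite ?Q2R_x1q, ?Q2R_x2q, ?Q2R_y1q, ?Q2R_y3q; assumption.
Qed.

Lemma point_bound t lo hi xq yq : box_check 64 xq xq yq yq t lo hi = true ->
  Q2R lo <= eval (env (Q2R xq) (Q2R yq)) t <= Q2R hi.
Proof. intro Hc. apply (box_check_correct 64 xq xq yq yq); [lia | exact Hc | lra | lra]. Qed.

Definition F_x (x y : R) : R := eval (env x y) (deriv dx f_term).
Definition F_y (x y : R) : R := eval (env x y) (deriv dy f_term).
Definition G_x (x y : R) : R := eval (env x y) (deriv dx g_term).
Definition G_y (x y : R) : R := eval (env x y) (deriv dy g_term).

Lemma y3_pos : 0 < y3.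
Proof. unfold y3. lra. Qed.

Lemma off_primaries_on_rect x y : y3 <= y -> off_primaries x y.
Proof. intro Hy. apply off_primaries_of_y_neq0. pose proof y3_pos. lra. Qed.

Lemma F_x_spec x y : x2 <= x <= x1 -> y3 <= y <= y1 ->
  derivable_pt_lim (fun s => F s y) x (F_x x y) /\ 7 / 10 <= F_x x y <= 3.
Proof.
  intros Hx Hy. split; [exact (eval_deriv_x f_term x y (off_primaries_on_rect x y (proj1 Hy)))|].
  pose proof (rect_bound (deriv dx f_term) (7#10) 3 x y ltac:(vm_compute; reflexivity) Hx Hy).
  rewrite !Q2R_literal in *. unfold F_x. lra.
Qed.

Lemma F_y_spec x y : x2 <= x <= x1 -> y3 <= y <= y1 ->
  derivable_pt_lim (fun s => F x s) y (F_y x y) /\ 0 <= F_y x y <= 3.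
Proof.
  intros Hx Hy. split; [exact (eval_deriv_y f_term x y (off_primaries_on_rect x y (proj1 Hy)))|].
  pose proof (rect_bound (deriv dy f_term) 0 3 x y ltac:(vm_compute; reflexivity) Hx Hy).
  rewrite !Q2R_literal in *. unfold F_y. lra.
Qed.

Lemma G_x_spec x y : x2 <= x <= x1 -> y3 <= y <= y1 ->
  derivable_pt_lim (fun s => G s y) x (G_x x y) /\ 0 <= G_x x y <= 3.
Proof.
  intros Hx Hy. split; [exact (eval_deriv_x g_term x y (off_primaries_on_rect x y (proj1 Hy)))|].
  pose proof (rect_bound (deriv dx g_term) 0 3 x y ltac:(vm_compute; reflexivity) Hx Hy).
  rewrite !Q2R_literal in *. unfold G_x. lra.
Qed.

Lemma G_y_spec x y : x2 <= x <= x1 -> y3 <= y <= y1 ->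
  derivable_pt_lim (fun s => G x s) y (G_y x y) /\ -3 <= G_y x y <= 3.
Proof.
  intros Hx Hy. split; [exact (eval_deriv_y g_term x y (off_primaries_on_rect x y (proj1 Hy)))|].
  pose proof (rect_bound (deriv dy g_term) (-3) 3 x y ltac:(vm_compute; reflexivity) Hx Hy).
  rewrite !Q2R_literal in *. unfold G_y. lra.
Qed.

Lemma F_x1_y3_pos : 0 < F x1 y3.
Proof.
  pose proof (point_bound f_term (1#10000000000000) 1 x1q y3q ltac:(vm_compute; reflexivity)).
  rewrite Q2R_x1q, Q2R_y3q in *. rewrite !Q2R_literal in *. unfold F. lra.
Qed.

Lemma G_x1_y3_neg : G x1 y3 < 0.
Proof.
  pose proof (point_bound g_term (-1) (-1#10000000000000) x1q y3q ltac:(vm_compute; reflexivity)).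
  rewrite Q2R_x1q, Q2R_y3q in *. rewrite !Q2R_literal in *. unfold G. lra.
Qed.

Lemma F_x2_y1_neg : F x2 y1 < 0.
Proof.
  pose proof (point_bound f_term (-1) (-1#10000000000000) x2q y1q ltac:(vm_compute; reflexivity)).
  rewrite Q2R_x2q, Q2R_y1q in *. rewrite !Q2R_literal in *. unfold F. lra.
Qed.

Lemma G_x2_y1_pos : 0 < G x2 y1.
Proof.
  pose proof (point_bound g_term (1#10000000000000) 1 x2q y1q ltac:(vm_compute; reflexivity)).
  rewrite Q2R_x2q, Q2R_y1q in *. rewrite !Q2R_literal in *. unfold G. lra.
Qed.

Lemma x2_lt_x1 : x2 < x1.
Proof. unfold x1, x2. lra. Qed.

Lemma y3_lt_y1 : y3 < y1.
Proof. unfold y1, y3. lra. Qed.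

Lemma F_right_edge y : y3 <= y <= y1 -> 0 < F x1 y.
Proof.
  intro Hy. pose proof x2_lt_x1. pose proof F_x1_y3_pos.
  assert (Hd : forall c, y3 <= c <= y -> derivable_pt_lim (F x1) c (F_y x1 c) /\ 0 <= F_y x1 c <= 3)
    by (intros c Hc; apply F_y_spec; lra).
  pose proof (increment_bounds (F x1) (F_y x1) y3 y 0 3 (proj1 Hy) Hd). lra.
Qed.

Lemma F_left_edge y : y3 <= y <= y1 -> F x2 y < 0.
Proof.
  intro Hy. pose proof x2_lt_x1. pose proof F_x2_y1_neg.
  assert (Hd : forall c, y <= c <= y1 -> derivable_pt_lim (F x2) c (F_y x2 c) /\ 0 <= F_y x2 c <= 3)
    by (intros c Hc; apply F_y_spec; lra).
  pose proof (increment_bounds (F x2) (F_y x2) y y1 0 3 (proj2 Hy) Hd). lra.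
Qed.

Lemma G_top_edge x : x2 <= x <= x1 -> 0 < G x y1.
Proof.
  intro Hx. pose proof y3_lt_y1. pose proof G_x2_y1_pos.
  assert (Hd : forall c, x2 <= c <= x ->
            derivable_pt_lim (fun s => G s y1) c (G_x c y1) /\ 0 <= G_x c y1 <= 3)
    by (intros c Hc; apply G_x_spec; lra).
  pose proof (increment_bounds (fun s => G s y1) (fun s => G_x s y1) x2 x 0 3 (proj1 Hx) Hd).
  simpl in *. lra.
Qed.

Lemma G_bottom_edge x : x2 <= x <= x1 -> G x y3 < 0.
Proof.
  intro Hx. pose proof y3_lt_y1. pose proof G_x1_y3_neg.
  assert (Hd : forall c, x <= c <= x1 ->
            derivable_pt_lim (fun s => G s y3) c (G_x c y3) /\ 0 <= G_x c y3 <= 3)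
    by (intros c Hc; apply G_x_spec; lra).
  pose proof (increment_bounds (fun s => G s y3) (fun s => G_x s y3) x x1 0 3 (proj2 Hx) Hd).
  simpl in *. lra.
Qed.

Lemma is_f_on_rect x y : y3 <= y -> is_f mu0 c0 x y (F x y).
Proof. intro Hy. apply is_f_F. pose proof y3_pos. lra. Qed.

Lemma is_g_on_rect x y : x2 <= x <= x1 -> is_g mu0 c0 x y (G x y).
Proof. intro Hx. apply is_g_G; unfold x1, x2, mu0 in *; lra. Qed.

Theorem mainTheorem1 :
  x2 < x1 /\ y3 < y1 /\
  (forall x, x2 <= x <= x1 -> exists d, is_g mu0 c0 x y1 d /\ d > 0) /\
  (forall x, x2 <= x <= x1 -> exists d, is_g mu0 c0 x y3 d /\ d < 0) /\
  (forall y, y3 <= y <= y1 -> exists d, is_f mu0 c0 x1 y d /\ d > 0) /\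
  (forall y, y3 <= y <= y1 -> exists d, is_f mu0 c0 x2 y d /\ d < 0) /\
  (exists xi0 eta0, x2 <= xi0 <= x1 /\ y3 <= eta0 <= y1 /\
     is_f mu0 c0 xi0 eta0 0 /\ is_g mu0 c0 xi0 eta0 0).
Proof.
  pose proof x2_lt_x1. pose proof y3_lt_y1.
  split; [assumption|]. split; [assumption|].
  split; [intros x Hx; exists (G x y1); split; [apply is_g_on_rect | apply G_top_edge]; exact Hx|].
  split; [intros x Hx; exists (G x y3); split; [apply is_g_on_rect | apply G_bottom_edge]; exact Hx|].
  split; [intros y Hy; exists (F x1 y); split; [apply is_f_on_rect; lra | apply F_right_edge, Hy]|].
  split; [intros y Hy; exists (F x2 y); split; [apply is_f_on_rect; lra | apply F_left_edge, Hy]|].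
  assert (Hweaken : forall (P : Prop) v, P /\ 0 <= v <= 3 -> P /\ -3 <= v <= 3)
    by (intros P v [HP Hv]; split; [exact HP | lra]).
  destruct (common_zero_in_box F G F_x F_y G_x G_y x2 x1 y3 y1 (7 / 10) 3)
    as (x0 & y0 & Hx0 & Hy0 & HF & HG);
    try assumption; try lra.
  - exact F_x_spec.
  - intros x y Hx Hy. apply Hweaken, F_y_spec; assumption.
  - intros x y Hx Hy. apply Hweaken, G_x_spec; assumption.
  - exact G_y_spec.
  - exact F_left_edge.
  - exact F_right_edge.
  - exact G_bottom_edge.
  - exact G_top_edge.
  - exists x0, y0. split; [exact Hx0|]. split; [exact Hy0|]. split.
    + rewrite <- HF. apply is_f_on_rect. lra.
    + rewrite <- HG. apply is_g_on_rect, Hx0.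
Qed.
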